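(* Let $m\ge 4$ and let $K\ne\Delta_{[m]}$ be a simplicial complex on $[m]$. Then $\mathrm{Bier}(K)$ is chordal if and only if $K$ contains no edges or $K^\vee$ contains no edges.
   Context: A simplicial complex $K$ on $[m]=\{1,\dots,m\}$ is a nonempty family of subsets of $[m]$ closed under taking subsets; an edge is a face of cardinality $2$. $\Delta_{[m]}=2^{[m]}$. Let $[m']=\{1',\dots,m'\}$ be a disjoint copy of $[m]$, $I'=\{i':i\in I\}$. For $K\ne\Delta_{[m]}$ the Alexander dual $K^\vee$ is the complex on $[m']$ with $J'\in K^\vee$ iff $[m]\setminus J\notin K$. The Bier sphere $\mathrm{Bier}(K)$ is the complex on $[m]\sqcup[m']$ with faces $I\sqcup J'$, $I\in K$, $J'\in K^\vee$, $I\cap J=\varnothing$. A graph is chordal if it has no induced cycle of length greater than $3$; a simplicial complex is chordal if its 1-skeleton is a chordal graph. *)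

From mathcomp Require Import all_boot.
Set Implicit Arguments. Unset Strict Implicit. Unset Printing Implicit Defensive.

Definition simplicial_complex (T : finType) (K : {set {set T}}) : Prop :=
  K != set0 /\ (forall A B : {set T}, A \in K -> B \subset A -> B \in K).

Definition full_simplex (T : finType) : {set {set T}} := [set: {set T}].

(* Alexander dual: J' in K^v iff [m] \ J notin K.  The copy [m'] is
   represented by the same type 'I_m (used via inr in the Bier sphere). *)
Definition alexander_dual (T : finType) (K : {set {set T}}) : {set {set T}} :=
  [set J | ~: J \notin K].

(* Bier sphere on [m] ⊔ [m'] = T + T: faces I ⊔ J' with I in K, J' in K^v,
   I ∩ J = ∅.  A subset S of T + T is I ⊔ J' with I = S ∩ [m], J = S ∩ [m']. *)
Definition bier (T : finType) (K : {set {set T}}) : {set {set (T + T)}} :=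
  [set S : {set (T + T)} |
     [&& [set i | inl i \in S] \in K,
         [set j | inr j \in S] \in alexander_dual K &
         [disjoint [set i | inl i \in S] & [set j | inr j \in S]]]].

Definition has_edge (T : finType) (K : {set {set T}}) : Prop :=
  exists2 A : {set T}, A \in K & #|A| = 2.

Definition skel_adj (T : finType) (K : {set {set T}}) (u v : T) : bool :=
  (u != v) && ([set u; v] \in K).

Definition induced_long_cycle (T : finType) (e : rel T) (k : nat) (f : 'I_k -> T) : Prop :=
  3 < k /\ injective f /\
  (forall i j : 'I_k, e (f i) (f j) = ((val j == (val i).+1 %% k) || (val i == (val j).+1 %% k))).

Definition chordal_graph (T : finType) (e : rel T) : Prop :=
  forall (k : nat) (f : 'I_k -> T), ~ induced_long_cycle e f.

Definition chordal_complex (T : finType) (K : {set {set T}}) : Prop :=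
  chordal_graph (skel_adj K).

From mathcomp Require Import all_boot zify.
From Stdlib Require Import Classical.
Set Implicit Arguments. Unset Strict Implicit. Unset Printing Implicit Defensive.

(* In the 1-skeleton of Bier(K), x ~ y iff {x,y} is an edge of K, x' ~ y' iff
   {x,y} is an edge of K^v, i.e. the complement of {x,y} is a nonface of K, and
   x ~ y' iff x <> y (and both are vertices).  If K has no edge, the complement
   of a pair (at least two points, as m >= 4) is a nonface, so the primed
   vertices form a clique and the unprimed ones are independent: Bier(K) is a
   split graph, hence chordal.  The case where K^v has no edge is symmetric.
   Conversely, suppose both have edges.  If some pair {x,y} is an edge of both,
   then x, y, x', y' is an induced square.  Otherwise the complement of every
   edge of K is a face, which forces an edge {p,q} of K^v to meet an edge
   {p,p'} of K in exactly one vertex; any fourth vertex r then yields an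
   induced square, either on p, p', q, r or on the primed copies of
   p, q, p', r. *)

Section InducedCycles.
Variables (V : finType) (e : rel V).

Lemma induced_long_cycle_steps k (f : 'I_k -> V) : induced_long_cycle e f ->
  exists v : nat -> V,
    forall n, [/\ e (v n) (v n.+1), ~~ e (v n) (v n.+2) & v n != v n.+2].
Proof.
case=> k_gt3 [f_inj f_adj]; have k_gt0 : 0 < k by lia.
have modS x : (x %% k).+1 %% k = x.+1 %% k by rewrite -addn1 modnDml addn1.
have mod_shift n i j : i < k -> j < k -> (n + i == n + j %[mod k]) = (i == j).
  by move=> ik jk; rewrite eqn_modDl !modn_small.
exists (fun n => f (Ordinal (ltn_pmod n k_gt0))) => n.
rewrite !f_adj (inj_eq f_inj) -val_eqE /= !modS eqxx; split=> //.
  by rewrite -[n.+3]addn3 -[n.+2]addn2 -[n.+1]addn1 -{3}[n]addn0 !mod_shift; lia.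
by rewrite -[n.+2]addn2 -{1}[n]addn0 mod_shift; lia.
Qed.

Lemma split_graph_chordal (P : pred V) :
  (forall u w, P u -> P w -> u != w -> e u w) ->
  (forall u w, ~~ P u -> ~~ P w -> ~~ e u w) ->
  chordal_graph e.
Proof.
move=> clique indep k f /induced_long_cycle_steps [v steps].
(* A clique vertex at step n forces clique vertices at the non-adjacent steps
   n+1 and n+3. *)
have P_edge u w : e u w -> P u || P w.
  by apply: contraTT; rewrite negb_or => /andP [Nu Nw]; exact: indep.
have notP n : ~~ P (v n).
  apply/negP=> Pn; have [_ ne02 n02] := steps n.
  have [e12 ne13 n13] := steps n.+1; have [e23 _ _] := steps n.+2.
  have N2 : ~~ P (v n.+2) by apply: contraNN ne02 => P2; exact: clique.
  have P1 : P (v n.+1) by move: (P_edge _ _ e12); rewrite (negbTE N2) orbF.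
  have P3 : P (v n.+3) by move: (P_edge _ _ e23); rewrite (negbTE N2).
  by move/negP: ne13; apply; exact: clique.
have [e01 _ _] := steps 0.
by move: (P_edge _ _ e01); rewrite (negbTE (notP 0)) (negbTE (notP 1)).
Qed.

Lemma induced_square_not_chordal v0 v1 v2 v3 :
  symmetric e -> irreflexive e ->
  v0 != v2 -> v1 != v3 ->
  e v0 v1 -> e v1 v2 -> e v2 v3 -> e v3 v0 -> ~~ e v0 v2 -> ~~ e v1 v3 ->
  ~ chordal_graph e.
Proof.
move=> e_sym e_irr n02 n13 e01 e12 e23 e30 ne02 ne13 chordal.
have neq u w : e u w -> u != w by apply: contraTneq => ->; rewrite e_irr.
have uniq_v : uniq [:: v0; v1; v2; v3].
  by rewrite /= !inE !negb_or n02 n13 !neq // e_sym.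
apply: (chordal 4 (fun i => nth v0 [:: v0; v1; v2; v3] i)); split=> //; split.
  by move=> i j /eqP; rewrite nth_uniq // => /eqP /val_inj.
move: ne02 ne13 => /negbTE ne02 /negbTE ne13.
by case=> [[|[|[|[|i]]]] Hi] [[|[|[|[|j]]]] Hj] //=;
  rewrite ?e_irr // ?e01 ?e12 ?e23 ?e30 ?ne02 ?ne13 // e_sym
  ?e01 ?e12 ?e23 ?e30 ?ne02 ?ne13.
Qed.

End InducedCycles.

Lemma skel_adj_sym (T : finType) (K : {set {set T}}) : symmetric (skel_adj K).
Proof. by move=> u v; rewrite /skel_adj eq_sym setUC. Qed.

Lemma skel_adj_irr (T : finType) (K : {set {set T}}) : irreflexive (skel_adj K).
Proof. by move=> u; rewrite /skel_adj eqxx. Qed.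

Lemma card_setC2 (T : finType) (x y : T) : #|T| - 2 <= #|~: [set x; y]|.
Proof.
have := cardsC [set x; y].
have : #|[set x; y]| <= 2 by rewrite cards2; case: (x != y).
lia.
Qed.

Lemma pair_subset_setC2 (T : finType) (a b c d : T) :
  a != c -> a != d -> b != c -> b != d -> [set a; b] \subset ~: [set c; d].
Proof.
by move=> ac ad bc bd; rewrite subUset !sub1set !inE !negb_or ac ad bc bd.
Qed.

Lemma exists_avoid3 (T : finType) (a b c : T) : 3 < #|T| ->
  exists r, [/\ r != a, r != b & r != c].
Proof.
move=> T_card; have : #|[set a; b; c]| <= 3.
  by rewrite cardsU cards2 cards1; case: (a != b); lia.
move: (cardsC [set a; b; c]) => card_abc le3.
have /card_gt0P [r] : 0 < #|~: [set a; b; c]| by lia.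
by rewrite !inE !negb_or => /andP [/andP [ra rb] rc]; exists r.
Qed.

Lemma card_face_le1 (T : finType) (F : {set {set T}}) A :
  simplicial_complex F -> ~ has_edge F -> A \in F -> #|A| <= 1.
Proof.
case=> _ F_down no_edge AF; rewrite leqNgt.
apply/negP => /card_gt1P [a [b [aA bA ab]]].
apply: no_edge; exists [set a; b]; last by rewrite cards2 ab.
by apply: (F_down A); rewrite // subUset !sub1set aA bA.
Qed.

Section BierSphere.
Variables (T : finType) (K : {set {set T}}).
Hypotheses (K_complex : simplicial_complex K) (K_proper : K != full_simplex T).
Hypothesis T_card : 4 <= #|T|.

Let K_down : forall A B : {set T}, A \in K -> B \subset A -> B \in K := K_complex.2.

Lemma set0_in_complex : set0 \in K.
Proof. by case/set0Pn: K_complex.1 => A AK; apply: (K_down AK); apply: sub0set. Qed.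

Lemma setT_notin_complex : setT \notin K.
Proof.
apply: contra K_proper => TK; apply/eqP/setP => A.
by rewrite inE (K_down TK) ?subsetT.
Qed.

Lemma alexander_dual_complex : simplicial_complex (alexander_dual K).
Proof.
split; first by apply/set0Pn; exists set0; rewrite inE setC0 setT_notin_complex.
move=> A B; rewrite !inE => AD BA; apply: contra AD => BK.
by apply: (K_down BK); rewrite setCS.
Qed.

Lemma bier_adj_ll x y :
  skel_adj (bier K) (inl x) (inl y) = (x != y) && ([set x; y] \in K).
Proof.
rewrite /skel_adj inE (inj_eq inl_inj).
have -> : [set i | inl i \in ([set inl x; inl y] : {set T + T})] = [set x; y].
  by apply/setP => i; rewrite !inE.
have -> : [set j | inr j \in ([set inl x; inl y] : {set T + T})] = set0.
  by apply/setP => j; rewrite !inE.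
by rewrite inE setC0 setT_notin_complex -setI_eq0 setI0 eqxx !andbT.
Qed.

Lemma bier_adj_rr x y :
  skel_adj (bier K) (inr x) (inr y) = (x != y) && (~: [set x; y] \notin K).
Proof.
rewrite /skel_adj inE (inj_eq inr_inj).
have -> : [set i | inl i \in ([set inr x; inr y] : {set T + T})] = set0.
  by apply/setP => i; rewrite !inE.
have -> : [set j | inr j \in ([set inr x; inr y] : {set T + T})] = [set x; y].
  by apply/setP => j; rewrite !inE.
by rewrite inE set0_in_complex -setI_eq0 set0I eqxx andbT.
Qed.

Lemma bier_adj_lr x y :
  skel_adj (bier K) (inl x) (inr y) =
    [&& x != y, [set x] \in K & ~: [set y] \notin K].
Proof.
rewrite /skel_adj inE.
have -> : [set i | inl i \in ([set inl x; inr y] : {set T + T})] = [set x].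
  by apply/setP => i; rewrite !inE orbF.
have -> : [set j | inr j \in ([set inl x; inr y] : {set T + T})] = [set y].
  by apply/setP => j; rewrite !inE.
by rewrite inE disjoints1 in_set1 /=; case: (x != y); rewrite ?andbF ?andbT.
Qed.

Lemma pair_in_complex_of_setC2 a b c d : ~: [set c; d] \in K ->
  a != c -> a != d -> b != c -> b != d -> [set a; b] \in K.
Proof. by move=> cdK ac ad bc bd; apply: (K_down cdK); apply: pair_subset_setC2. Qed.

Lemma bier_not_chordal_of_common_edge x y :
  x != y -> [set x; y] \in K -> ~: [set x; y] \notin K -> ~ chordal_complex (bier K).
Proof.
move=> xy xyK xyD.
have [xK yK] : [set x] \in K /\ [set y] \in K.
  by split; apply: (K_down xyK); rewrite sub1set !inE eqxx ?orbT.
have [xD yD] : ~: [set x] \notin K /\ ~: [set y] \notin K.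
  by split; apply: contra xyD => /K_down; apply;
    rewrite setCS sub1set !inE eqxx ?orbT.
apply: (@induced_square_not_chordal _ _ (inl x) (inl y) (inr x) (inr y)) => //.
- exact: skel_adj_sym.
- exact: skel_adj_irr.
- by rewrite bier_adj_ll xy.
- by rewrite bier_adj_lr eq_sym xy yK.
- by rewrite bier_adj_rr xy.
- by rewrite skel_adj_sym bier_adj_lr xy xK.
- by rewrite bier_adj_lr eqxx.
- by rewrite bier_adj_lr eqxx.
Qed.

(* The first hypothesis says that no pair is an edge of both K and K^v. *)
Lemma bier_not_chordal_of_dual_edge_meeting_edge p p' q :
  (forall x y, x != y -> [set x; y] \in K -> ~: [set x; y] \in K) ->
  p != p' -> [set p; p'] \in K -> q != p -> q != p' -> ~: [set p; q] \notin K ->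
  ~ chordal_complex (bier K).
Proof.
move=> compl_edge pp' pp'K qp qp' pqD.
have [r [rp rp' rq]] := exists_avoid3 p p' q T_card.
have [p'p pq p'q] : [/\ p' != p, p != q & p' != q] by split; rewrite eq_sym.
have [pr p'r qr] : [/\ p != r, p' != r & q != r] by split; rewrite eq_sym.
have pp'C := compl_edge _ _ pp' pp'K.
have pqK : [set p; q] \notin K by apply: contra pqD; exact: compl_edge.
have qrK : [set q; r] \in K by apply: (pair_in_complex_of_setC2 pp'C).
have p'rK : [set p'; r] \notin K.
  by apply: contra pqK => /(compl_edge _ _ p'r) /pair_in_complex_of_setC2; apply.
have [prK | prK] := boolP ([set p; r] \in K).
  have p'qK : [set p'; q] \in K.
    by apply: (pair_in_complex_of_setC2 (compl_edge _ _ pr prK)).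
  apply: (@induced_square_not_chordal _ _ (inl p) (inl p') (inl q) (inl r)) => //.
  - exact: skel_adj_sym.
  - exact: skel_adj_irr.
  - by rewrite bier_adj_ll pp'.
  - by rewrite bier_adj_ll p'q.
  - by rewrite bier_adj_ll qr.
  - by rewrite bier_adj_ll rp setUC.
  - by rewrite bier_adj_ll (negbTE pqK) andbF.
  - by rewrite bier_adj_ll (negbTE p'rK) andbF.
have p'qK : [set p'; q] \notin K.
  by apply: contra prK => /(compl_edge _ _ p'q) /pair_in_complex_of_setC2; apply.
apply: (@induced_square_not_chordal _ _ (inr p) (inr q) (inr p') (inr r)) => //.
- exact: skel_adj_sym.
- exact: skel_adj_irr.
- by rewrite bier_adj_rr pq.
- by rewrite bier_adj_rr qp'; apply: contra prK => /pair_in_complex_of_setC2; apply.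
- by rewrite bier_adj_rr p'r; apply: contra pqK => /pair_in_complex_of_setC2; apply.
- by rewrite bier_adj_rr rp; apply: contra p'qK => /pair_in_complex_of_setC2; apply.
- by rewrite bier_adj_rr pp'C andbF.
- by rewrite bier_adj_rr (compl_edge _ _ qr qrK) andbF.
Qed.

Lemma bier_not_chordal_of_edges :
  has_edge K -> has_edge (alexander_dual K) -> ~ chordal_complex (bier K).
Proof.
case=> A abK /eqP /cards2P [a [b [ab eqA]]]; subst A.
case=> B + /eqP /cards2P [c [d [cd eqB]]]; subst B; rewrite inE => cdD.
have [[x [y [xy xyK xyD]]] | no_common] := classic
  (exists x y, [/\ x != y, [set x; y] \in K & ~: [set x; y] \notin K]).
  exact: bier_not_chordal_of_common_edge xy xyK xyD.
have compl_edge x y : x != y -> [set x; y] \in K -> ~: [set x; y] \in K.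
  by move=> xy xyK; apply/negPn/negP => xyD; apply: no_common; exists x, y.
have cdK : [set c; d] \notin K by apply: contra cdD; exact: compl_edge.
have meet : (c \in [set a; b]) || (d \in [set a; b]).
  apply/negPn/negP; rewrite negb_or !inE !negb_or.
  move=> /andP [/andP [ca cb] /andP [da db]].
  by move/negP: cdK; apply; apply: (pair_in_complex_of_setC2 (compl_edge _ _ ab abK)).
wlog cab : c d cd cdD cdK {meet} / c \in [set a; b].
  move=> wlog_c; case/orP: meet => [|dab]; first exact: (wlog_c c d).
  by apply: (wlog_c d c); rewrite // 1?eq_sym 1?setUC.
wlog ca : a b ab abK {cab} / c = a.
  move=> wlog_a; move: cab; rewrite !inE => /orP [/eqP|/eqP cb].
    exact: (wlog_a a b).
  by apply: (wlog_a b a); rewrite // 1?eq_sym 1?setUC.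
subst c.
apply: (bier_not_chordal_of_dual_edge_meeting_edge (q := d) compl_edge ab abK) => //.
  by rewrite eq_sym.
by apply: contraNneq cdK => ->.
Qed.

Lemma bier_chordal_of_no_edge : ~ has_edge K -> chordal_complex (bier K).
Proof.
move=> no_edge.
apply: (@split_graph_chordal _ _ (fun v => if v is inr _ then true else false)).
  move=> [x|x] [y|y] //= _ _; rewrite (inj_eq inr_inj) bier_adj_rr => -> /=.
  apply/negP => /(card_face_le1 K_complex no_edge); have := card_setC2 x y; lia.
move=> [x|x] [y|y] //= _ _; rewrite bier_adj_ll; apply/negP => /andP [xy xyK].
by apply: no_edge; exists [set x; y]; rewrite // cards2 xy.
Qed.

Lemma bier_chordal_of_no_dual_edge :
  ~ has_edge (alexander_dual K) -> chordal_complex (bier K).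
Proof.
move=> no_edge.
apply: (@split_graph_chordal _ _ (fun v => if v is inl _ then true else false)).
  move=> [x|x] [y|y] //= _ _; rewrite (inj_eq inl_inj) bier_adj_ll => -> /=.
  apply/negPn/negP => xyK; have := card_setC2 x y.
  have := card_face_le1 (A := ~: [set x; y]) alexander_dual_complex no_edge.
  by rewrite inE setCK xyK => /(_ isT); lia.
move=> [x|x] [y|y] //= _ _; rewrite bier_adj_rr; apply/negP => /andP [xy xyD].
by apply: no_edge; exists [set x; y]; rewrite ?inE // cards2 xy.
Qed.

End BierSphere.

Theorem mainTheorem14 (m : nat) (K : {set {set 'I_m}}) :
  4 <= m -> simplicial_complex K -> K != full_simplex 'I_m ->
  (chordal_complex (bier K) <-> (~ has_edge K \/ ~ has_edge (alexander_dual K))).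
Proof.
move=> m_ge4 K_complex K_proper; have T_card : 3 < #|'I_m| by rewrite card_ord.
split=> [chordal | [no_edge | no_dual_edge]].
- have [edgeK | no_edgeK] := classic (has_edge K); last by left.
  right=> edgeD.
  exact: (bier_not_chordal_of_edges K_complex K_proper T_card edgeK edgeD chordal).
- exact: bier_chordal_of_no_edge.
- exact: bier_chordal_of_no_dual_edge.
Qed.
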